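(* Let $a\ge 1$ and let $d$ be an odd integer with $d<a$. Then $U=\{(a,0),(0,0)\}\cup\{(c,d)\in\mathcal{B}\mid \max\{c,c+d\}<a\}$ is avoidable.
   Context: The bicyclic inverse semigroup is $\mathcal{B}=\{(a,b)\in\mathbb{Z}\times\mathbb{Z}\mid a\ge 0,\ a+b\ge 0\}$ with multiplication $(a,b)(c,d)=(\max\{c+d,a\}-d,\ b+d)$. A subset $U\subseteq\mathcal{B}$ is called avoidable if $\mathcal{B}$ can be partitioned into two subsets $A$ and $B$ such that no element of $U$ can be written as a product $xy$ of two distinct elements $x\neq y$ both in $A$, or both in $B$. *)

From Stdlib Require Import ZArith.
Open Scope Z_scope.

(* The bicyclic inverse semigroup B = {(a,b) in Z x Z | a >= 0, a + b >= 0}. *)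
Definition inB (p : Z * Z) : Prop := 0 <= fst p /\ 0 <= fst p + snd p.

Definition bmul (x y : Z * Z) : Z * Z :=
  let (a, b) := x in let (c, d) := y in (Z.max (c + d) a - d, b + d).

Definition avoidable (U : Z * Z -> Prop) : Prop :=
  exists A B' : Z * Z -> Prop,
    (forall p, A p -> inB p) /\ (forall p, B' p -> inB p) /\
    (forall p, inB p -> A p \/ B' p) /\
    (forall p, A p -> B' p -> False) /\
    (forall x y, x <> y -> A x -> A y -> ~ U (bmul x y)) /\
    (forall x y, x <> y -> B' x -> B' y -> ~ U (bmul x y)).

Definition U54 (a d : Z) (p : Z * Z) : Prop :=
  p = (a, 0) \/ p = (0, 0) \/
  (snd p = d /\ inB p /\ Z.max (fst p) (fst p + d) < a).

(* A product (p,q)(r,s) has second coordinate q + s, so it can lie in U only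
   when q + s is 0 or d.  Colour (p,q) by a 2-colouring of the integers in
   which q and -q (q <> 0), as well as q and d - q, always get different
   colours; it exists because q -> -q fixes only 0 and q -> d - q has no fixed
   point (d is odd), so the graph with these edges is a disjoint union of
   paths.  The element (a,0) gets the colour opposite to that of 0: it must,
   since (a,0)(r,0) = (a,0) for r <= a, and it is harmless, since a product of
   (a,0) with an element of nonzero second coordinate is never in U. *)
From Stdlib Require Import ZArith Lia.
Open Scope Z_scope.

(* On multiples k d the colour is the sign of k; on the other residue classes
   modulo |d| it says whether the residue lies in the upper half. *)
Definition reflection_colour (d q : Z) : bool :=
  let m := Z.abs d in
  let r := q mod m in
  if r =? 0 then 0 <? q * d else m <? 2 * r.

Section ReflectionColour.

Variable d : Z.
Hypothesis d_odd : Z.odd d = true.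

Let d_neq0 : d <> 0.
Proof. intros ->; discriminate. Qed.

Let absd_neq0 : Z.abs d <> 0.
Proof. lia. Qed.

Lemma multiple_or_nonzero_residue (q : Z) :
  (exists k, q = k * d) \/ q mod Z.abs d <> 0.
Proof.
  destruct (Z.eq_dec (q mod Z.abs d) 0) as [Hr | Hr]; [left | now right].
  apply (Z.mod_divide _ _ absd_neq0) in Hr; rewrite Z.divide_abs_l in Hr.
  destruct Hr as [k Hk]; now exists k.
Qed.

Lemma reflection_colour_mul (k : Z) : reflection_colour d (k * d) = (0 <? k).
Proof.
  unfold reflection_colour.
  assert (Hmod : (k * d) mod Z.abs d = 0).
  { apply Z.mod_divide; [exact absd_neq0 |].
    apply Z.divide_abs_l; exists k; reflexivity. }
  rewrite Hmod; simpl.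
  assert (Hsq : 0 < d * d) by nia.
  destruct (Z.ltb_spec 0 (k * d * d)), (Z.ltb_spec 0 k); nia.
Qed.

Lemma reflection_colour0 : reflection_colour d 0 = false.
Proof. exact (reflection_colour_mul 0). Qed.

Lemma reflection_colour_compl_residue (q s : Z) :
  (q + s) mod Z.abs d = 0 -> q mod Z.abs d <> 0 ->
  reflection_colour d s = negb (reflection_colour d q).
Proof.
  intros Hsum Hq.
  set (m := Z.abs d) in *.
  assert (Hs : s mod m = m - q mod m).
  { replace s with (- q + ((q + s) / m) * m)
      by (pose proof (Z.div_mod (q + s) m absd_neq0); lia).
    rewrite Z.mod_add, Z.mod_opp_l_nz; auto. }
  pose proof (Z.mod_pos_bound q m ltac:(lia)).
  apply Z.odd_spec in d_odd as [t Ht].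
  unfold reflection_colour; fold m; rewrite Hs.
  destruct (Z.eqb_spec (m - q mod m) 0), (Z.eqb_spec (q mod m) 0); lia.
Qed.

Lemma reflection_colour_opp (q : Z) :
  q <> 0 -> reflection_colour d (- q) = negb (reflection_colour d q).
Proof.
  intros Hq.
  destruct (multiple_or_nonzero_residue q) as [[k ->] | Hr].
  - replace (- (k * d)) with (- k * d) by ring.
    rewrite !reflection_colour_mul.
    assert (k <> 0) by (intros ->; apply Hq; ring).
    destruct (Z.ltb_spec 0 (- k)), (Z.ltb_spec 0 k); lia.
  - apply reflection_colour_compl_residue; [| exact Hr].
    now rewrite Z.add_opp_diag_r, Zmod_0_l.
Qed.

Lemma reflection_colour_reflect (q : Z) :
  reflection_colour d (d - q) = negb (reflection_colour d q).
Proof.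
  destruct (multiple_or_nonzero_residue q) as [[k ->] | Hr].
  - replace (d - k * d) with ((1 - k) * d) by ring.
    rewrite !reflection_colour_mul.
    destruct (Z.ltb_spec 0 (1 - k)), (Z.ltb_spec 0 k); lia.
  - apply reflection_colour_compl_residue; [| exact Hr].
    replace (q + (d - q)) with (1 * d) by ring.
    apply Z.mod_divide; [exact absd_neq0 |].
    apply Z.divide_abs_l; exists 1; reflexivity.
Qed.

Lemma reflection_colour_sum_0_or_d (q s : Z) :
  q + s = 0 \/ q + s = d -> (q, s) <> (0, 0) ->
  reflection_colour d s = negb (reflection_colour d q).
Proof.
  intros [Hs | Hs] Hnz.
  - replace s with (- q) by lia.
    apply reflection_colour_opp; intros ->; apply Hnz; f_equal; lia.
  - replace s with (d - q) by lia; apply reflection_colour_reflect.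
Qed.

End ReflectionColour.

Definition corner_colour (a d : Z) (x : Z * Z) : bool :=
  if ((fst x =? a) && (snd x =? 0))%bool then true else reflection_colour d (snd x).

Lemma corner_colour_corner (a d : Z) : corner_colour a d (a, 0) = true.
Proof. unfold corner_colour; simpl; now rewrite Z.eqb_refl. Qed.

Lemma corner_colour_cases (a d : Z) (x : Z * Z) :
  x = (a, 0) \/ (x <> (a, 0) /\ corner_colour a d x = reflection_colour d (snd x)).
Proof.
  destruct x as [p q]; unfold corner_colour; simpl.
  destruct (Z.eqb_spec p a), (Z.eqb_spec q 0); simpl; subst; auto;
    right; split; auto; intros [=]; contradiction.
Qed.

Lemma U54_snd (a d : Z) (p : Z * Z) : U54 a d p -> snd p = 0 \/ snd p = d.
Proof. intros [-> | [-> | [Hd _]]]; auto. Qed.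

Lemma not_U54_bmul_corner_l (a d r s : Z) : s <> 0 -> ~ U54 a d (bmul (a, 0) (r, s)).
Proof. unfold U54, bmul; simpl; intros Hs [[=] | [[=] | [-> [_ Hmax]]]]; lia. Qed.

Lemma not_U54_bmul_corner_r (a d p q : Z) : q <> 0 -> ~ U54 a d (bmul (p, q) (a, 0)).
Proof. unfold U54, bmul; simpl; intros Hq [[=] | [[=] | [_ [_ Hmax]]]]; lia. Qed.

Lemma U54_bmul_snd0 (a d p r : Z) :
  Z.odd d = true -> 0 <= p -> 0 <= r -> U54 a d (bmul (p, 0) (r, 0)) ->
  p = a \/ r = a \/ (p = 0 /\ r = 0).
Proof.
  unfold U54, bmul; simpl; intros Hd Hp Hr [[=] | [[=] | [Hd0 _]]]; try lia.
  subst d; discriminate.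
Qed.

Lemma corner_colour_separates (a d : Z) (hd : Z.odd d = true) (x y : Z * Z) :
  inB x -> inB y -> x <> y -> corner_colour a d x = corner_colour a d y ->
  ~ U54 a d (bmul x y).
Proof.
  destruct x as [p q], y as [r s].
  intros [Hp _] [Hr _] Hne Hcol HU; simpl in Hp, Hr.
  destruct (corner_colour_cases a d (p, q)) as [Hx | [Hx Hcx]];
    [injection Hx as -> ->|];
    destruct (corner_colour_cases a d (r, s)) as [Hy | [Hy Hcy]];
    try (injection Hy as -> ->); cbn [snd] in *; try congruence.
  - destruct (Z.eq_dec s 0) as [-> | Hs].
    + rewrite Hcy, (reflection_colour0 d hd), corner_colour_corner in Hcol; discriminate.
    + exact (not_U54_bmul_corner_l a d r s Hs HU).
  - destruct (Z.eq_dec q 0) as [-> | Hq].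
    + rewrite Hcx, (reflection_colour0 d hd), corner_colour_corner in Hcol; discriminate.
    + exact (not_U54_bmul_corner_r a d p q Hq HU).
  - rewrite Hcx, Hcy in Hcol.
    destruct (Z.eq_dec q 0) as [-> | Hq], (Z.eq_dec s 0) as [-> | Hs];
      [destruct (U54_bmul_snd0 a d p r hd Hp Hr HU) as [-> | [-> | [-> ->]]]; congruence | ..];
      rewrite (reflection_colour_sum_0_or_d d hd _ _ (U54_snd _ _ _ HU)) in Hcol by congruence;
      exact (Bool.no_fixpoint_negb _ (eq_sym Hcol)).
Qed.

Lemma avoidable_of_colouring (U : Z * Z -> Prop) (c : Z * Z -> bool) :
  (forall x y, inB x -> inB y -> x <> y -> c x = c y -> ~ U (bmul x y)) ->
  avoidable U.
Proof.
  intros Hc.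
  exists (fun p => inB p /\ c p = true), (fun p => inB p /\ c p = false).
  split; [now intros z [Hz _] |].
  split; [now intros z [Hz _] |].
  split; [| split; [| split]].
  - intros z Hz; destruct (c z); auto.
  - intros z [_ H1] [_ H2]; congruence.
  - intros x y Hne [Hx Hcx] [Hy Hcy]; apply Hc; congruence.
  - intros x y Hne [Hx Hcx] [Hy Hcy]; apply Hc; congruence.
Qed.

Theorem proposition5p4 (a d : Z) (ha : 1 <= a) (hd : Z.odd d = true) (hda : d < a) :
  avoidable (U54 a d).
Proof.
  apply (avoidable_of_colouring _ (corner_colour a d)).
  exact (corner_colour_separates a d hd).
Qed.
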